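(* Let $\alpha>0$, $0<p<1$, and for $j=1,\dots,n$ let $(X_{j1},X_{j2})\sim BDEW(\alpha,p,\beta_{j1},\beta_{j2},\beta_{j3})$ with $\beta_{j1},\beta_{j2},\beta_{j3}>0$, the pairs $(X_{j1},X_{j2})$, $j=1,\dots,n$, being independent. Let $Z_1=\max\{X_{11},\dots,X_{n1}\}$ and $Z_2=\max\{X_{12},\dots,X_{n2}\}$. Then $$(Z_1,Z_2)\sim BDEW\Big(\alpha,p,\sum_{j=1}^n\beta_{j1},\sum_{j=1}^n\beta_{j2},\sum_{j=1}^n\beta_{j3}\Big).$$
   Context: The exponentiated discrete Weibull distribution $EDW(\alpha,p,\beta)$ ($\alpha,\beta>0$, $0<p<1$) is the distribution on $\mathbb{N}_0=\{0,1,2,\dots\}$ with cumulative distribution function $F_{EDW}(x;\alpha,p,\beta)=[1-p^{([x]+1)^{\alpha}}]^{\beta}$ for real $x\ge 0$, where $[x]$ is the largest integer $\le x$. The bivariate discrete exponentiated Weibull distribution $BDEW(\alpha,p,\beta_1,\beta_2,\beta_3)$ is the distribution of $(\max\{V_1,V_3\},\max\{V_2,V_3\})$ where $V_1,V_2,V_3$ are independent with $V_i\sim EDW(\alpha,p,\beta_i)$; equivalently it has joint CDF $F(x_1,x_2)=[1-p^{(x_1+1)^{\alpha}}]^{\beta_1}[1-p^{(x_2+1)^{\alpha}}]^{\beta_2}[1-p^{(\min\{x_1,x_2\}+1)^{\alpha}}]^{\beta_3}$ for $x_1,x_2\in\mathbb{N}_0$. *)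

From HB Require Import structures.
From mathcomp Require Import all_boot all_order all_algebra.
From mathcomp Require Import all_classical all_reals all_analysis.
Set Implicit Arguments. Unset Strict Implicit. Unset Printing Implicit Defensive.
Import Order.TTheory GRing.Theory Num.Theory.
Local Open Scope classical_set_scope.
Local Open Scope ring_scope.

Definition edw_cdf {R : realType} (alpha p beta : R) (x : nat) : R :=
  (1 - p `^ ((x.+1)%:R `^ alpha)) `^ beta.

Definition bdew_cdf {R : realType} (alpha p b1 b2 b3 : R) (x1 x2 : nat) : R :=
  edw_cdf alpha p b1 x1 * edw_cdf alpha p b2 x2 * edw_cdf alpha p b3 (minn x1 x2).

Definition has_BDEW {d} {T : measurableType d} {R : realType}
  (P : probability T R) (Y : T -> nat * nat) (alpha p b1 b2 b3 : R) : Prop :=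
  forall x1 x2 : nat,
    P [set t | ((Y t).1 <= x1)%N /\ ((Y t).2 <= x2)%N] =
      (bdew_cdf alpha p b1 b2 b3 x1 x2)%:E.

(* Mutual independence of a finite family of (nat*nat)-valued random elements:
   product rule for all choices of events (taking B j = setT for the
   unused indices gives the product rule for every subfamily). *)
Definition mutually_independent {d} {T : measurableType d} {R : realType}
  (P : probability T R) (n : nat) (X : 'I_n -> T -> nat * nat) : Prop :=
  forall B : 'I_n -> set (nat * nat),
    P (\bigcap_(j in [set: 'I_n]) (X j @^-1` B j)) =
      (\prod_(j < n) P (X j @^-1` B j))%E.

From HB Require Import structures.
From mathcomp Require Import all_boot all_order all_algebra.
From mathcomp Require Import all_classical all_reals all_analysis.
Import Order.TTheory GRing.Theory Num.Theory.
Local Open Scope classical_set_scope.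
Local Open Scope ring_scope.

(* The event {Z1 <= x1, Z2 <= x2} is the intersection of the events
   {X_j1 <= x1, X_j2 <= x2}, so by independence its probability is the product
   of the joint CDFs of the pairs.  Each EDW factor is a power c^beta of the
   same base c = 1 - p^((x+1)^alpha), so the product of the BDEW CDFs is again
   a BDEW CDF whose shape parameters are the sums. *)

Lemma prod_powR (R : realType) (I : Type) (r : seq I) (P : pred I)
    (c : R) (b : I -> R) :
  c != 0 -> \prod_(i <- r | P i) c `^ b i = c `^ (\sum_(i <- r | P i) b i).
Proof.
move=> c_neq0; apply: (big_ind2 (fun u v => u = c `^ v)) => //.
- by rewrite powRr0.
- by move=> u e v f -> ->; rewrite powRD // c_neq0 implybT.
Qed.

Lemma edw_base_neq0 (R : realType) (alpha p : R) (x : nat) :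
  0 < p -> p < 1 -> 1 - p `^ ((x.+1)%:R `^ alpha) != 0.
Proof.
move=> p_gt0 p_lt1.
rewrite subr_eq0 eq_sym powR_eq1 negb_or (lt_eqF p_lt1) /= negb_or -leNgt.
by rewrite (ltW p_gt0) /= gt_eqF // powR_gt0 // ltr0n.
Qed.

Section ProductOfCdfs.
Variables (R : realType) (alpha p : R).
Hypotheses (p_gt0 : 0 < p) (p_lt1 : p < 1).

Lemma prod_edw_cdf (I : Type) (r : seq I) (P : pred I) (b : I -> R) (x : nat) :
  \prod_(i <- r | P i) edw_cdf alpha p (b i) x
    = edw_cdf alpha p (\sum_(i <- r | P i) b i) x.
Proof. exact/prod_powR/edw_base_neq0. Qed.

Lemma prod_bdew_cdf (I : Type) (r : seq I) (P : pred I) (b1 b2 b3 : I -> R)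
    (x1 x2 : nat) :
  \prod_(i <- r | P i) bdew_cdf alpha p (b1 i) (b2 i) (b3 i) x1 x2
    = bdew_cdf alpha p (\sum_(i <- r | P i) b1 i) (\sum_(i <- r | P i) b2 i)
        (\sum_(i <- r | P i) b3 i) x1 x2.
Proof. by rewrite /bdew_cdf -!prod_edw_cdf -!big_split. Qed.

End ProductOfCdfs.

Lemma bigmax_pair_cdf_independent (d : measure_display) (T : measurableType d)
    (R : realType) (P : probability T R) (n : nat) (X : 'I_n -> T -> nat * nat)
    (x1 x2 : nat) :
  mutually_independent P X ->
  P [set t | (\max_(j < n) (X j t).1 <= x1)%N /\ (\max_(j < n) (X j t).2 <= x2)%N]
    = (\prod_(j < n) P [set t | ((X j t).1 <= x1)%N /\ ((X j t).2 <= x2)%N])%E.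
Proof.
pose B : set (nat * nat) := [set y | (y.1 <= x1)%N /\ (y.2 <= x2)%N].
move=> /(_ (fun=> B)) <-; congr (P _).
apply/seteqP; split => t /=.
- by move=> [/bigmax_leqP le1 /bigmax_leqP le2] j _; split; [exact: le1 | exact: le2].
- by move=> le; split; apply/bigmax_leqP => j _; case: (le j I).
Qed.

Theorem mainTheorem6 (d : measure_display) (T : measurableType d) (R : realType)
  (P : probability T R) (n : nat) (hn : (0 < n)%N)
  (alpha p : R) (b1 b2 b3 : 'I_n -> R)
  (X : 'I_n -> T -> nat * nat)
  (halpha : 0 < alpha) (hp0 : 0 < p) (hp1 : p < 1)
  (hb1 : forall j, 0 < b1 j) (hb2 : forall j, 0 < b2 j) (hb3 : forall j, 0 < b3 j)
  (hmeas : forall j (B : set (nat * nat)), measurable (X j @^-1` B))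
  (hdist : forall j, has_BDEW P (X j) alpha p (b1 j) (b2 j) (b3 j))
  (hindep : mutually_independent P X) :
  has_BDEW P (fun t => (\max_(j < n) (X j t).1, \max_(j < n) (X j t).2)%N)
    alpha p (\sum_(j < n) b1 j) (\sum_(j < n) b2 j) (\sum_(j < n) b3 j).
Proof.
move=> x1 x2; rewrite /= bigmax_pair_cdf_independent //.
rewrite (eq_bigr _ (fun j _ => hdist j x1 x2)) prodEFin.
by rewrite prod_bdew_cdf.
Qed.
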